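(* Consider the one-cell system. Assume that at time $0$ the disk rotates with angular velocity $\hat\omega$ and that none of the particles which are inside the cell will collide with the disk before time $\tau>0$. Then, given any $\omega\in\mathbb{R}$ and any $0<\delta<\tau$, there exists a way to inject one particle into the cell through the left opening $\partial\Gamma_{\rm L}$ at time $0$ (with a suitable injection point and inward-pointing velocity) such that at time $\delta$ the disk has angular velocity $\omega$ and the injected particle has left the cell through $\partial\Gamma_{\rm L}$. The same holds with $\partial\Gamma_{\rm R}$ in place of $\partial\Gamma_{\rm L}$.
   Context: Cell geometry. Let $\Gamma_{\rm box}\subset\mathbb{R}^2$ be a bounded connected closed domain such that $(x,y)\in\Gamma_{\rm box}$ implies $x\in[0,L]$. Its boundary is $\partial\Gamma_{\rm box}=\partial\Gamma_{\rm L}\cup\partial\Gamma_{\rm R}\cup\bigcup_{k=1}^b\partial\Gamma_k$, where $\partial\Gamma_{\rm L}=\{(0,y):y\in[-a,a]\}$ and $\partial\Gamma_{\rm R}=\{(L,y):y\in[-a,a]\}$ are the two ''openings'' ($a>0$), and each $\partial\Gamma_k$ is an arc of a circle $C_k$ with center $c_k$, the arcs being oriented so that $\partial\Gamma_{\rm box}$ is everywhere dispersing (the arcs bulge into the domain). In the interior of $\Gamma_{\rm box}$ lies a closed disk $D$ of center $c=(L/2,0)$ and radius $r$ with $\partial D\cap\partial\Gamma_{\rm box}=\emptyset$, and for every $z\in\partial\Gamma_{\rm box}$ the segment $[c,z]$ meets $\partial\Gamma_{\rm box}$ only at $z$. The cell is $\Gamma=\Gamma_{\rm box}\setminus D$ (with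 boundary $\partial\Gamma=\partial\Gamma_{\rm box}\cup\partial D$); its corners $\partial\Gamma^*$ are the points where two of the boundary pieces (arcs or openings) meet. Dynamics. Point particles move in straight lines with constant velocity inside $\Gamma$ and do not interact with each other. The disk has an angular position $\phi\in[0,2\pi)$ and angular velocity $\omega\in\mathbb{R}$ with $\dot\phi=\omega$ between collisions. At a point $q$ of $\partial\Gamma$ write the particle velocity as $v=v^{\rm n}e_{\rm n}+v^{\rm t}e_{\rm t}$ with $e_{\rm n}$ the outward unit normal and $e_{\rm t}$ the unit tangent. Collision rules (primes denote values after collision; positions and $\phi$ are unchanged): (1) if $q\in\partial\Gamma_{\rm L}\cup\partial\Gamma_{\rm R}$, the particle continues straight and leaves the cell; (2) if $q\in\partial\Gamma_{\rm box}\setminus(\partial\Gamma_{\rm L}\cup\partial\Gamma_{\rm R})$, then $(v^{\rm n})'=-v^{\rm n}$, $(v^{\rm t})'=v^{\rm t}$ (specular reflection); (3) if $q\in\partial D$, then $(v^{\rm n})'=-v^{\rm n}$, $(v^{\rm t})'=\omega$, $\omega'=v^{\rm t}$. Heat baths. Particles may be injected into the cell at any time through $\partial\Gamma_{\rm L}$ or $\partial\Gamma_{\rm R}$, at any point of the opening and with any velocity pointing into the cell; a realization of the injection process on a time interval is the finite collection of such injection times, points and velocities. Every open set of realizations is assumed to have positive probability. *)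

From Stdlib Require Import Reals Lra List.
Import ListNotations.
Open Scope R_scope.

Definition pt := (R * R)%type.
Definition padd (p q : pt) : pt := (fst p + fst q, snd p + snd q).
Definition psub (p q : pt) : pt := (fst p - fst q, snd p - snd q).
Definition pscal (s : R) (p : pt) : pt := (s * fst p, s * snd p).
Definition dot (p q : pt) : R := fst p * fst q + snd p * snd q.
Definition dist (p q : pt) : R := sqrt (dot (psub p q) (psub p q)).

Definition interior (S : pt -> Prop) (x : pt) : Prop :=
  exists e, 0 < e /\ forall y, dist x y < e -> S y.
Definition closure (S : pt -> Prop) (x : pt) : Prop :=
  forall e, 0 < e -> exists y, S y /\ dist x y < e.
Definition boundary (S : pt -> Prop) (x : pt) : Prop :=
  closure S x /\ ~ interior S x.
Definition is_open (S : pt -> Prop) : Prop := forall x, S x -> interior S x.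
Definition is_closed (S : pt -> Prop) : Prop := forall x, closure S x -> S x.
Definition bounded (S : pt -> Prop) : Prop :=
  exists M, forall x, S x -> dist x (0, 0) <= M.
Definition connected (S : pt -> Prop) : Prop :=
  ~ exists U V : pt -> Prop,
      is_open U /\ is_open V /\
      (forall x, S x -> U x \/ V x) /\
      (exists x, S x /\ U x) /\ (exists x, S x /\ V x) /\
      (forall x, ~ (S x /\ U x /\ V x)).

Record cell := Cell {
  cL : R;
  ca : R;                 (* half-height a of the openings *)
  Gbox : pt -> Prop;
  nb : nat;               (* number b of arcs; arcs indexed by k < nb *)
  arc_center : nat -> pt;
  arc_radius : nat -> R;
  arc_from : nat -> R;    (* arc k = { c_k + rho_k (cos t, sin t) | from <= t <= to } *)
  arc_to : nat -> R;
  cr : R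
}.

Definition dcenter (C : cell) : pt := (cL C / 2, 0).

Definition onL (C : cell) (x : pt) : Prop := fst x = 0 /\ - ca C <= snd x <= ca C.
Definition onR (C : cell) (x : pt) : Prop := fst x = cL C /\ - ca C <= snd x <= ca C.
Definition onArc (C : cell) (k : nat) (x : pt) : Prop :=
  exists t, arc_from C k <= t <= arc_to C k /\
    x = padd (arc_center C k) (pscal (arc_radius C k) (cos t, sin t)).

Inductive piece := PL | PR | PA (k : nat).
Definition valid_piece (C : cell) (p : piece) : Prop :=
  match p with PA k => (k < nb C)%nat | _ => True end.
Definition onPiece (C : cell) (p : piece) (x : pt) : Prop :=
  match p with PL => onL C x | PR => onR C x | PA k => onArc C k x end.
Definition corner (C : cell) (x : pt) : Prop :=
  exists p1 p2, p1 <> p2 /\ valid_piece C p1 /\ valid_piece C p2 /\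
    onPiece C p1 x /\ onPiece C p2 x.

Definition cell_ok (C : cell) : Prop :=
  0 < cL C /\ 0 < ca C /\ 0 < cr C /\
  bounded (Gbox C) /\ is_closed (Gbox C) /\ connected (Gbox C) /\
  (forall x, Gbox C x <-> closure (interior (Gbox C)) x) /\
  (forall x, Gbox C x -> 0 <= fst x <= cL C) /\
  (forall k, (k < nb C)%nat ->
     0 < arc_radius C k /\ arc_from C k < arc_to C k < arc_from C k + 2 * PI) /\
  (forall x, boundary (Gbox C) x <->
     (onL C x \/ onR C x \/ exists k, (k < nb C)%nat /\ onArc C k x)) /\
  (* dispersing: near each arc point, Gamma_box lies outside the circle C_k *)
  (forall k, (k < nb C)%nat -> forall z, onArc C k z ->
     exists e, 0 < e /\ forall y, dist y z < e ->
       dist y (arc_center C k) < arc_radius C k -> ~ Gbox C y) /\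
  (forall x, dist x (dcenter C) <= cr C -> interior (Gbox C) x) /\
  (forall x, dist x (dcenter C) = cr C -> ~ boundary (Gbox C) x) /\
  (forall z, boundary (Gbox C) z -> forall s, 0 <= s < 1 ->
     ~ boundary (Gbox C) (padd (dcenter C) (pscal s (psub z (dcenter C))))).

Definition inGamma (C : cell) (x : pt) : Prop := Gbox C x /\ cr C <= dist x (dcenter C).
Definition intGamma (C : cell) (x : pt) : Prop :=
  interior (Gbox C) x /\ cr C < dist x (dcenter C).
Definition onDisk (C : cell) (x : pt) : Prop := dist x (dcenter C) = cr C.

(** normals (outward w.r.t. Gamma) and tangent *)
Definition diskN (C : cell) (q : pt) : pt := pscal (/ cr C) (psub (dcenter C) q).
Definition arcN (C : cell) (k : nat) (q : pt) : pt :=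
  pscal (/ arc_radius C k) (psub (arc_center C k) q).
(* unit tangent e_t: e_n rotated by +pi/2 (fixes the sign convention for omega) *)
Definition tang (n : pt) : pt := (- snd n, fst n).
Definition reflect (n v : pt) : pt := psub v (pscal (2 * dot v n) n).

Record event := Ev { etime : R; epos : pt; evin : pt; evout : pt }.

Definition is_exit (C : cell) (e : event) : Prop := onL C (epos e) \/ onR C (epos e).
Definition is_disk_ev (C : cell) (e : event) : Prop := onDisk C (epos e).

Definition free_flight (C : cell) (t0 : R) (x0 v0 : pt) (t1 : R) : Prop :=
  forall s, t0 < s < t1 -> intGamma C (padd x0 (pscal (s - t0) v0)).

(* collision rules; w : R -> R is the angular velocity of the disk as a
   function of time, the value just before time t being its left limit *)
Definition event_ok (C : cell) (w : R -> R) (e : event) : Prop :=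
  let q := epos e in
  (boundary (Gbox C) q \/ onDisk C q) /\ ~ corner C q /\
  (onL C q \/ onR C q -> evout e = evin e) /\
  (forall k, (k < nb C)%nat -> onArc C k q ->
     evout e = reflect (arcN C k q) (evin e)) /\
  (onDisk C q ->
     dot (evout e) (diskN C q) = - dot (evin e) (diskN C q) /\
     exists eps, 0 < eps /\ forall s, etime e - eps < s < etime e ->
       w s = dot (evout e) (tang (diskN C q))).

(* a particle path on [t0,T] started at x0 with velocity v0, given by the
   chronological list of its collisions; a collision with an opening is an
   exit and is the last event *)
Fixpoint path_from (C : cell) (w : R -> R) (T t0 : R) (x0 v0 : pt)
    (E : list event) : Prop :=
  match E with
  | [] => t0 <= T /\ free_flight C t0 x0 v0 T
  | e :: E' =>
      t0 < etime e <= T /\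
      epos e = padd x0 (pscal (etime e - t0) v0) /\
      evin e = v0 /\
      free_flight C t0 x0 v0 (etime e) /\
      event_ok C w e /\
      (is_exit C e -> E' = []) /\
      (~ is_exit C e -> path_from C w T (etime e) (epos e) (evout e) E')
  end.

Definition sys_ok (C : cell) (omh T : R) (P : list (pt * pt)) (w : R -> R)
    (Es : list (list event)) : Prop :=
  w 0 = omh /\
  Forall2 (fun p E => path_from C w T 0 (fst p) (snd p) E) P Es /\
  (forall s t, 0 <= s -> s < t -> t <= T ->
     (forall E e, In E Es -> In e E -> is_disk_ev C e -> ~ (s < etime e <= t)) ->
     w s = w t) /\
  (forall E e, In E Es -> In e E -> is_disk_ev C e ->
     w (etime e) = dot (evin e) (tang (diskN C (epos e)))) /\
  (forall i j E1 E2 e1 e2, i <> j -> nth_error Es i = Some E1 ->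
     nth_error Es j = Some E2 -> In e1 E1 -> In e2 E2 ->
     is_disk_ev C e1 -> is_disk_ev C e2 -> etime e1 <> etime e2).

(** openings: side true = left opening, false = right opening *)
Definition opening (C : cell) (left : bool) (y : pt) : Prop :=
  if left then onL C y else onR C y.
Definition inward (left : bool) (v : pt) : Prop :=
  if left then 0 < fst v else fst v < 0.

(* A fast particle is shot horizontally from the opening towards the nearest point
   (L/2 -+ r, 0) of the disk, with vertical velocity omega.  The collision there is
   head-on, so the normal is horizontal and the tangential components are exchanged:
   the disk takes the angular velocity omega and the particle the old value omh as
   vertical velocity, while its horizontal velocity is reversed, sending it straight
   back out through the same opening.  For a large enough speed the round trip takes
   less than delta and the path stays in the triangle spanned by the disk centre and
   the opening, which lies in the interior of Gamma_box because every segment from the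
   centre to the boundary meets the boundary only at its endpoint.  The particles
   already in the cell do not reach the disk before tau > delta, so their motion does
   not depend on the disk rotation on [0, delta]. *)

From Stdlib Require Import Reals List Lra Classical.
Import ListNotations.
Open Scope R_scope.

Lemma dist_lt_sq p q e : 0 < e ->
  (fst p - fst q) * (fst p - fst q) + (snd p - snd q) * (snd p - snd q) < e * e ->
  dist p q < e.
Proof.
  intros He H. unfold dist, dot, psub; simpl.
  rewrite <- (sqrt_square e) by lra.
  apply sqrt_lt_1_alt; split; [apply Rplus_le_le_0_compat; apply Rle_0_sqr | lra].
Qed.

Lemma dist_le_sq p q e : 0 <= e ->
  (fst p - fst q) * (fst p - fst q) + (snd p - snd q) * (snd p - snd q) <= e * e ->
  dist p q <= e.
Proof.
  intros He H. unfold dist, dot, psub; simpl.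
  rewrite <- (sqrt_square e) by lra.
  apply sqrt_le_1_alt; nra.
Qed.

Lemma lt_dist_sq p q e : 0 <= e ->
  e * e < (fst p - fst q) * (fst p - fst q) + (snd p - snd q) * (snd p - snd q) ->
  e < dist p q.
Proof.
  intros He H. unfold dist, dot, psub; simpl.
  rewrite <- (sqrt_square e) by lra.
  apply sqrt_lt_1_alt; split; [nra | lra].
Qed.

Lemma dist_eq_sq p q e : 0 <= e ->
  (fst p - fst q) * (fst p - fst q) + (snd p - snd q) * (snd p - snd q) = e * e ->
  dist p q = e.
Proof.
  intros He H. unfold dist, dot, psub; simpl.
  rewrite H. apply sqrt_square; lra.
Qed.

Lemma dist_refl p : dist p p = 0.
Proof. apply dist_eq_sq; [lra | ring]. Qed.

Lemma interior_incl S x : interior S x -> S x.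
Proof.
  intros (e & He & Hball). apply Hball. rewrite dist_refl. exact He.
Qed.

Lemma incl_closure S x : S x -> closure S x.
Proof.
  intros Hx e He. exists x. rewrite dist_refl. auto.
Qed.

Lemma interior_of_not_boundary S x : S x -> ~ boundary S x -> interior S x.
Proof.
  intros Hx Hb. apply NNPP. intro Hi. apply Hb. split; [apply incl_closure|]; auto.
Qed.

Lemma Rabs_bounds x : - Rabs x <= x <= Rabs x.
Proof. pose proof (Rle_abs (- x)) as Hneg. rewrite Rabs_Ropp in Hneg. pose proof (Rle_abs x). lra. Qed.

Lemma cos_lt_1 t : 0 < t < 2 * PI -> cos t < 1.
Proof.
  intros Ht. replace t with (2 * (t / 2)) by field.
  rewrite cos_2a_sin. assert (0 < sin (t / 2)) by (apply sin_gt_0; lra). nra.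
Qed.

Lemma step_inside_circle rho t c s sg : s * s + c * c = 1 -> sg * sg = 1 ->
  sg * c < 1 -> 0 < t < rho ->
  (rho * c + t * (sg - c)) * (rho * c + t * (sg - c))
  + (rho * s - t * s) * (rho * s - t * s) < rho * rho.
Proof.
  intros Hcs Hsg Hc Ht.
  assert (Hid : (rho * c + t * (sg - c)) * (rho * c + t * (sg - c))
                + (rho * s - t * s) * (rho * s - t * s)
                = rho * rho - 2 * t * (1 - sg * c) * (rho - t)
                  + (rho - t) * (rho - t) * (s * s + c * c - 1) + t * t * (sg * sg - 1))
    by ring.
  assert (0 < t * (1 - sg * c) * (rho - t)) by (apply Rmult_lt_0_compat; [apply Rmult_lt_0_compat|]; lra).
  rewrite Hid, Hcs, Hsg. lra.
Qed.

Lemma exists_pos_le4 a b c d : 0 < a -> 0 < b -> 0 < c -> 0 < d ->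
  exists t, 0 < t /\ t <= a /\ t <= b /\ t <= c /\ t <= d.
Proof.
  intros. exists (Rmin (Rmin a b) (Rmin c d)).
  pose proof (Rmin_l a b). pose proof (Rmin_r a b).
  pose proof (Rmin_l c d). pose proof (Rmin_r c d).
  pose proof (Rmin_l (Rmin a b) (Rmin c d)). pose proof (Rmin_r (Rmin a b) (Rmin c d)).
  assert (0 < Rmin (Rmin a b) (Rmin c d)) by (repeat apply Rmin_glb_lt; assumption).
  lra.
Qed.

Definition segment (c z : pt) (s : R) : pt := padd c (pscal s (psub z c)).

Lemma dist_segment c z s s' :
  dist (segment c z s) (segment c z s') = Rabs (s - s') * dist z c.
Proof.
  unfold dist, dot, segment, padd, pscal, psub; simpl.
  rewrite <- sqrt_Rsqr_abs, <- sqrt_mult.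
  - f_equal. unfold Rsqr. ring.
  - apply Rle_0_sqr.
  - apply Rplus_le_le_0_compat; apply Rle_0_sqr.
Qed.

Lemma dist_segment_lt c z s s' e : 0 < e ->
  Rabs (s - s') < e / (dist z c + 1) -> dist (segment c z s) (segment c z s') < e.
Proof.
  intros He Hs. rewrite dist_segment.
  assert (Hd : 0 <= dist z c) by apply sqrt_pos.
  apply Rmult_lt_compat_r with (r := dist z c + 1) in Hs; [|lra].
  replace (e / (dist z c + 1) * (dist z c + 1)) with e in Hs by (field; lra).
  pose proof (Rabs_pos (s - s')). nra.
Qed.

Lemma real_induction (Q : R -> Prop) :
  Q 0 ->
  (forall m, 0 < m <= 1 -> (forall s, 0 <= s < m -> Q s) -> Q m) ->
  (forall m, 0 <= m < 1 -> Q m -> exists d, 0 < d /\ forall s, m < s < m + d -> Q s) ->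
  forall s, 0 <= s <= 1 -> Q s.
Proof.
  intros HQ0 Hclosed Hopen.
  pose (A := fun s => 0 <= s <= 1 /\ forall s', 0 <= s' <= s -> Q s').
  destruct (completeness A) as [m [Hub Hlub]].
  { exists 1. intros s [Hs _]. lra. }
  { exists 0. split; [lra|]. intros s' Hs'. replace s' with 0 by lra. exact HQ0. }
  assert (Hm0 : 0 <= m).
  { apply Hub. split; [lra|]. intros s' Hs'. replace s' with 0 by lra. exact HQ0. }
  assert (Hm1 : m <= 1) by (apply Hlub; intros s [Hs _]; lra).
  assert (Hbelow : forall s, 0 <= s < m -> Q s).
  { intros s Hs. apply NNPP. intro HnQ.
    assert (m <= s); [|lra]. apply Hlub. intros x [_ Hx].
    destruct (Rle_or_lt x s) as [|Hsx]; auto.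
    exfalso. apply HnQ, Hx. lra. }
  assert (HQm : Q m).
  { destruct (Req_dec m 0) as [-> | Hm]; [exact HQ0|]. apply Hclosed; [lra | exact Hbelow]. }
  assert (Hm : m = 1).
  { destruct (Req_dec m 1) as [|Hlt]; auto. exfalso.
    destruct (Hopen m ltac:(lra) HQm) as (d & Hd & Hnext).
    set (s1 := Rmin 1 (m + d / 2)).
    assert (Hs1 : m < s1) by (unfold s1; apply Rmin_glb_lt; lra).
    assert (s1 <= m); [|lra].
    apply Hub. split; [split; [lra | apply Rmin_l]|].
    intros s' Hs'. destruct (total_order_T s' m) as [[Hlt' | ->] | Hgt]; auto.
    - apply Hbelow. lra.
    - apply Hnext. assert (s1 <= m + d / 2) by apply Rmin_r. lra. }
  intros s Hs. subst m. destruct (Req_dec s 1) as [-> | Hs1]; auto.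
  apply Hbelow. lra.
Qed.

Definition sgn (left : bool) : R := if left then 1 else -1.
Definition opening_x (C : cell) (left : bool) : R := cL C / 2 - sgn left * (cL C / 2).

Lemma sgn_cases left : sgn left = 1 \/ sgn left = -1.
Proof. destruct left; [left | right]; reflexivity. Qed.

Lemma opening_iff C left y :
  opening C left y <-> fst y = opening_x C left /\ - ca C <= snd y <= ca C.
Proof. unfold opening, opening_x, onL, onR, sgn. destruct left; split; intros [H1 H2]; split; lra. Qed.

Lemma inward_iff left v : inward left v <-> 0 < sgn left * fst v.
Proof. unfold inward, sgn. destruct left; lra. Qed.

Lemma sgn_sq left : sgn left * sgn left = 1.
Proof. destruct (sgn_cases left) as [-> | ->]; ring. Qed.

Lemma Rabs_sgn left : Rabs (sgn left) = 1.
Proof. destruct (sgn_cases left) as [-> | ->]; unfold Rabs; destruct (Rcase_abs _); lra. Qed.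

Lemma event_ok_off_disk C w w' e : event_ok C w e -> ~ is_disk_ev C e -> event_ok C w' e.
Proof.
  unfold event_ok. intros (Hpos & Hcorner & Hexit & Harc & _) Hdisk.
  repeat split; auto; contradiction.
Qed.

(* A path whose disk collisions all happen at or after [T] never looks at the disk
   rotation before [T], so it can be cut at any earlier time [D] against any rotation. *)
Lemma path_from_truncate C w w' T D : D < T -> forall E t0 x v,
  path_from C w T t0 x v E -> (forall e, In e E -> is_disk_ev C e -> T <= etime e) ->
  t0 <= D ->
  exists E', path_from C w' D t0 x v E' /\ forall e, In e E' -> ~ is_disk_ev C e.
Proof.
  intros HDT E. induction E as [|e E IH]; intros t0 x v Hp Hdisk Ht0.
  - exists []. split; [|intros ? []]. destruct Hp as [_ Hfree].
    split; [exact Ht0|]. intros s Hs. apply Hfree. lra.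
  - destruct Hp as (Ht & Hpos & Hin & Hfree & Hev & Hexit & Hnext).
    destruct (Rle_or_lt (etime e) D) as [Hle | Hlt].
    + assert (Hnd : ~ is_disk_ev C e).
      { intro Hd. specialize (Hdisk e (or_introl eq_refl) Hd). lra. }
      assert (Hev' : event_ok C w' e) by (apply event_ok_off_disk with w; auto).
      destruct (classic (is_exit C e)) as [Hx | Hnx].
      * exists [e]. split; [|intros e' [<- | []]; exact Hnd].
        split; [lra|]. do 4 (split; [assumption|]).
        split; [intros _; reflexivity | intros Hn; contradiction].
      * destruct (IH (etime e) (epos e) (evout e)) as (E' & HE' & HE'd); auto.
        { intros e' He'. apply Hdisk. right. exact He'. }
        exists (e :: E'). split; [|intros e' [<- | He']; auto].
        split; [lra|]. do 4 (split; [assumption|]).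
        split; [intros Hx; contradiction | intros _; exact HE'].
    + exists []. split; [|intros ? []].
      split; [exact Ht0|]. intros s Hs. apply Hfree. lra.
Qed.

Lemma paths_truncate C w' tau delta (P : list (pt * pt)) : 0 <= delta < tau ->
  (forall p, In p P -> exists w E, path_from C w tau 0 (fst p) (snd p) E /\
     forall e, In e E -> is_disk_ev C e -> tau <= etime e) ->
  exists Es, Forall2 (fun p E => path_from C w' delta 0 (fst p) (snd p) E) P Es /\
    forall E e, In E Es -> In e E -> ~ is_disk_ev C e.
Proof.
  intros Hdelta. induction P as [|p P IH]; intros HP.
  - exists []. split; [constructor | intros ? ? []].
  - destruct IH as (Es & HF & HEs). { intros q Hq. apply HP. right. exact Hq. }
    destruct (HP p (or_introl eq_refl)) as (w & E & Hp & HE).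
    destruct (path_from_truncate C w w' tau delta ltac:(lra) E 0 (fst p) (snd p) Hp HE ltac:(lra))
      as (E' & HE' & HE'd).
    exists (E' :: Es). split; [constructor; assumption|].
    intros E0 e [<- | HE0] He; eauto.
Qed.

Section Cell.
Variable C : cell.
Hypothesis HC : cell_ok C.

Lemma cell_L_pos : 0 < cL C.
Proof. unfold cell_ok in HC; tauto. Qed.
Lemma cell_a_pos : 0 < ca C.
Proof. unfold cell_ok in HC; tauto. Qed.
Lemma cell_r_pos : 0 < cr C.
Proof. unfold cell_ok in HC; tauto. Qed.
Lemma Gbox_closed : is_closed (Gbox C).
Proof. unfold cell_ok in HC; tauto. Qed.
Lemma Gbox_fst : forall x, Gbox C x -> 0 <= fst x <= cL C.
Proof. unfold cell_ok in HC; tauto. Qed.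
Lemma arc_proper : forall k, (k < nb C)%nat ->
  0 < arc_radius C k /\ arc_from C k < arc_to C k < arc_from C k + 2 * PI.
Proof. unfold cell_ok in HC; tauto. Qed.
Lemma boundary_Gbox : forall x, boundary (Gbox C) x <->
  (onL C x \/ onR C x \/ exists k, (k < nb C)%nat /\ onArc C k x).
Proof. unfold cell_ok in HC; tauto. Qed.
Lemma arc_dispersing : forall k, (k < nb C)%nat -> forall z, onArc C k z ->
  exists e, 0 < e /\ forall y, dist y z < e ->
    dist y (arc_center C k) < arc_radius C k -> ~ Gbox C y.
Proof. unfold cell_ok in HC; tauto. Qed.
Lemma disk_interior : forall x, dist x (dcenter C) <= cr C -> interior (Gbox C) x.
Proof. unfold cell_ok in HC; tauto. Qed.
Lemma disk_not_boundary : forall x, dist x (dcenter C) = cr C -> ~ boundary (Gbox C) x.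
Proof. unfold cell_ok in HC; tauto. Qed.
Lemma center_segment_not_boundary : forall z, boundary (Gbox C) z -> forall s, 0 <= s < 1 ->
  ~ boundary (Gbox C) (segment (dcenter C) z s).
Proof. unfold cell_ok in HC; tauto. Qed.

(* [Gbox C] is closed and, away from [z], the segment avoids the boundary, so the
   set of parameters with [segment c z s] in [Gbox C] is closed and open in [0, 1]. *)
Lemma segment_center_interior z s : boundary (Gbox C) z -> 0 <= s < 1 ->
  interior (Gbox C) (segment (dcenter C) z s).
Proof.
  intros Hz Hs.
  set (c := dcenter C). set (K := dist z c).
  assert (HK : 0 <= K) by apply sqrt_pos.
  assert (Hin : forall s, 0 <= s <= 1 -> Gbox C (segment c z s)).
  { apply real_induction.
    - pose proof cell_r_pos.
      apply interior_incl, disk_interior, dist_le_sq; [lra|].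
      unfold segment, c, padd, pscal, psub; simpl. nra.
    - intros m Hm Hbelow. apply Gbox_closed. intros e He.
      assert (Hd : 0 < e / (K + 1)) by (apply Rdiv_lt_0_compat; lra).
      set (d := Rmin m (e / (K + 1)) / 2).
      assert (0 < d) by (unfold d; assert (0 < Rmin m (e / (K + 1))) by (apply Rmin_pos; lra); lra).
      exists (segment c z (m - d)). split.
      + apply Hbelow. split; [|lra]. unfold d. pose proof (Rmin_l m (e / (K + 1))). lra.
      + apply dist_segment_lt; [exact He|]. rewrite Rabs_pos_eq by lra. fold K.
        unfold d. pose proof (Rmin_r m (e / (K + 1))). lra.
    - intros m Hm HQ.
      destruct (interior_of_not_boundary _ _ HQ (center_segment_not_boundary z Hz m Hm))
        as (e & He & Hball).
      exists (e / (K + 1)). split; [apply Rdiv_lt_0_compat; lra|].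
      intros s' Hs'. apply Hball, dist_segment_lt; [exact He|].
      rewrite Rabs_left by lra. fold K. lra. }
  apply interior_of_not_boundary; [apply Hin; lra|].
  apply center_segment_not_boundary; assumption.
Qed.

Variable left : bool.

Lemma opening_boundary y : - ca C <= y <= ca C -> boundary (Gbox C) (opening_x C left, y).
Proof.
  intros Hy. apply boundary_Gbox.
  pose proof (opening_iff C left (opening_x C left, y)) as Hop.
  destruct left; [left | right; left]; apply Hop; simpl; auto.
Qed.

(* The triangle spanned by the disk centre and an opening: at horizontal depth [u]
   from the opening it is the segment [|y| <= a (1 - 2 u / L)]. *)
Lemma opening_cone_interior u y : 0 < u < cL C / 2 ->
  cL C * Rabs y <= ca C * (cL C - 2 * u) ->
  interior (Gbox C) (opening_x C left + sgn left * u, y).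
Proof.
  intros Hu Hy. pose proof cell_L_pos as HL. pose proof cell_a_pos as Ha.
  set (s := 1 - 2 * u / cL C).
  assert (HsL : s * cL C = cL C - 2 * u) by (unfold s; field; lra).
  assert (Hs : 0 < s < 1) by (split; nra).
  assert (Hys : y = s * (y / s)) by (field; lra).
  pose proof (Rabs_bounds y).
  replace (opening_x C left + sgn left * u, y)
    with (segment (dcenter C) (opening_x C left, y / s) s).
  - apply segment_center_interior; [|lra]. apply opening_boundary.
    split; nra.
  - unfold segment, opening_x, dcenter, padd, pscal, psub, s; simpl.
    f_equal; field; lra.
Qed.

Lemma disk_radius_lt_half : cr C < cL C / 2.
Proof.
  pose proof cell_r_pos.
  destruct (disk_interior (cL C / 2 - cr C, 0)) as (e & He & Hball).
  { apply dist_le_sq; [lra|]. unfold dcenter; simpl. nra. }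
  assert (Hin : Gbox C (cL C / 2 - cr C - e / 2, 0)).
  { apply Hball, dist_lt_sq; [exact He|]. simpl. nra. }
  apply Gbox_fst in Hin. simpl in Hin. lra.
Qed.

Lemma opening_cone_intGamma u y : 0 < u < cL C / 2 - cr C ->
  cL C * Rabs y <= ca C * (cL C - 2 * u) ->
  intGamma C (opening_x C left + sgn left * u, y).
Proof.
  intros Hu Hy. pose proof cell_r_pos.
  split; [apply opening_cone_interior; [lra | exact Hy]|].
  apply lt_dist_sq; [lra|]. unfold opening_x, dcenter; simpl.
  destruct (sgn_cases left) as [-> | ->]; nra.
Qed.

(* If [C_k] were tangent to the opening line at an arc point, the arc, which lies in the
   strip [0 <= x <= L], could contain no other point of the circle. *)
Lemma arc_crosses_opening_line k t0 : (k < nb C)%nat -> arc_from C k <= t0 <= arc_to C k ->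
  fst (arc_center C k) + arc_radius C k * cos t0 = opening_x C left ->
  sgn left * cos t0 < 1.
Proof.
  intros Hk Ht0 Hx0.
  destruct (arc_proper k Hk) as (Hrho & Hft).
  assert (Hsg : sgn left * cos t0 <= 1)
    by (pose proof (COS_bound t0); destruct (sgn_cases left) as [-> | ->]; lra).
  destruct Hsg as [|Hsg1]; [assumption | exfalso].
  assert (Hflat : forall t, arc_from C k <= t <= arc_to C k -> cos t = cos t0).
  { intros t Ht.
    assert (Hon : boundary (Gbox C) (padd (arc_center C k) (pscal (arc_radius C k) (cos t, sin t)))).
    { apply boundary_Gbox. right; right. exists k. split; [exact Hk|]. exists t. auto. }
    apply proj1, Gbox_closed, Gbox_fst in Hon. simpl in Hon.
    pose proof (COS_bound t). pose proof (COS_bound t0). unfold opening_x in Hx0.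
    destruct (sgn_cases left) as [Hs | Hs]; rewrite Hs in *; nra. }
  assert (Hc1 : cos t0 * cos t0 = 1)
    by (destruct (sgn_cases left) as [Hs | Hs]; rewrite Hs in Hsg1; nra).
  assert (Hsin : forall t, arc_from C k <= t <= arc_to C k -> sin t = 0).
  { intros t Ht. pose proof (sin2_cos2 t) as Hpyth. unfold Rsqr in Hpyth.
    rewrite (Hflat t Ht) in Hpyth. nra. }
  assert (Hcos1 : cos (arc_to C k - arc_from C k) = 1).
  { rewrite cos_minus, (Hflat (arc_to C k)), (Hflat (arc_from C k)),
      (Hsin (arc_to C k)), (Hsin (arc_from C k)) by lra. nra. }
  pose proof (cos_lt_1 (arc_to C k - arc_from C k)). lra.
Qed.

(* Starting from an arc point of the opening, a short step [t] in the direction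
   [(sgn, 0) - (cos t0, sin t0)] moves into the cone of [Gbox] and strictly inside the
   circle [C_k], which the dispersing condition forbids. *)
Lemma opening_not_on_arc k y0 : (k < nb C)%nat -> - ca C < y0 < ca C ->
  ~ onArc C k (opening_x C left, y0).
Proof.
  intros Hk Hy0 Hon.
  destruct (arc_dispersing k Hk _ Hon) as (e & He & Hnot).
  destruct Hon as (t0 & Ht0 & Heq).
  destruct (arc_proper k Hk) as (Hrho & _).
  pose proof cell_L_pos as HL. pose proof cell_a_pos as Ha.
  set (m := arc_center C k) in *. set (rho := arc_radius C k) in *.
  set (sg := sgn left). set (xo := opening_x C left) in *.
  assert (Ex : xo = fst m + rho * cos t0) by (apply (f_equal fst) in Heq; exact Heq).
  assert (Ey : y0 = snd m + rho * sin t0) by (apply (f_equal snd) in Heq; exact Heq).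
  pose proof (arc_crosses_opening_line k t0 Hk Ht0 (eq_sym Ex)) as Htr. fold sg in Htr.
  pose proof (COS_bound t0) as Hc0. pose proof (SIN_bound t0) as Hs0.
  set (c0 := cos t0) in *. set (s0 := sin t0) in *.
  assert (Hcs : s0 * s0 + c0 * c0 = 1)
    by (pose proof (sin2_cos2 t0) as Hpyth; unfold Rsqr in Hpyth; exact Hpyth).
  assert (Hsg2 : sg * sg = 1) by apply sgn_sq.
  assert (Hsc0 : - 1 <= sg * c0) by (unfold sg; destruct (sgn_cases left) as [-> | ->]; lra).
  pose proof (Rabs_bounds y0).
  assert (Hg : Rabs y0 < ca C) by (apply Rabs_def1; lra).
  destruct (exists_pos_le4 (rho / 2) (e / 4) (cL C / 8)
              ((ca C - Rabs y0) * cL C / (2 * (cL C + 4 * ca C))))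
    as (t & Ht & Ht1 & Ht2 & Ht3 & Ht4); try (apply Rdiv_lt_0_compat; nra).
  apply (Rmult_le_compat_r (2 * (cL C + 4 * ca C))) in Ht4; [|nra].
  replace ((ca C - Rabs y0) * cL C / (2 * (cL C + 4 * ca C)) * (2 * (cL C + 4 * ca C)))
    with ((ca C - Rabs y0) * cL C) in Ht4 by (field; nra).
  set (u := t * (1 - sg * c0)).
  assert (Hsu : sg * u = t * (sg - c0))
    by (unfold u; transitivity (t * (sg - sg * sg * c0)); [ring | rewrite Hsg2; ring]).
  apply (Hnot (xo + sg * u, y0 - t * s0)); rewrite ?Hsu.
  - apply dist_lt_sq; [exact He|]. simpl. nra.
  - apply dist_lt_sq; [lra|]. simpl.
    replace (xo + t * (sg - c0) - fst m) with (rho * c0 + t * (sg - c0)) by lra.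
    replace (y0 - t * s0 - snd m) with (rho * s0 - t * s0) by lra.
    apply step_inside_circle; auto; lra.
  - rewrite <- Hsu. apply interior_incl, opening_cone_interior; [unfold u; split; nra|].
    assert (Rabs (y0 - t * s0) <= Rabs y0 + t) by (apply Rabs_le; nra).
    assert (u <= 2 * t) by (unfold u; nra). nra.
Qed.

Lemma corner_boundary x : corner C x -> boundary (Gbox C) x.
Proof.
  intros (p1 & _ & _ & V1 & _ & O1 & _). apply boundary_Gbox.
  destruct p1 as [| |k]; simpl in O1; auto. right; right. exists k. auto.
Qed.

Lemma opening_not_corner y : - ca C < y < ca C -> ~ corner C (opening_x C left, y).
Proof.
  intros Hy (p1 & p2 & Hne & V1 & V2 & O1 & O2).
  pose proof cell_L_pos.
  destruct p1 as [| |k1]; [| |exact (opening_not_on_arc k1 y V1 Hy O1)];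
  (destruct p2 as [| |k2]; [| |exact (opening_not_on_arc k2 y V2 Hy O2)]);
  try (apply Hne; reflexivity); simpl in O1, O2; unfold onL, onR in *; simpl in *; lra.
Qed.

Section Injection.
Variables om omh delta : R.
Hypothesis Hdelta : 0 < delta.

(* Fast enough to reach the disk and come back before [delta], and so that the
   tangential drifts [om] and [omh] keep the particle inside the opening cone. *)
Definition inj_speed : R :=
  cL C / delta + cL C * (Rabs om + Rabs omh) / (2 * ca C) + 1.
Definition hit_time : R := (cL C / 2 - cr C) / inj_speed.
Definition v_in : pt := (sgn left * inj_speed, sgn left * om).
Definition v_out : pt := (- (sgn left * inj_speed), sgn left * omh).
Definition entry_point : pt := (opening_x C left, - (hit_time * (sgn left * om))).
Definition hit_point : pt := (cL C / 2 - sgn left * cr C, 0).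
Definition exit_point : pt := (opening_x C left, hit_time * (sgn left * omh)).
Definition hit_event : event := Ev hit_time hit_point v_in v_out.
Definition exit_event : event := Ev (hit_time + hit_time) exit_point v_out v_out.
Definition disk_rotation (s : R) : R := if Rlt_dec s hit_time then omh else om.

Lemma inj_speed_pos : 0 < inj_speed.
Proof.
  pose proof cell_L_pos. pose proof cell_a_pos.
  pose proof (Rabs_pos om). pose proof (Rabs_pos omh).
  assert (0 < cL C / delta) by (apply Rdiv_lt_0_compat; lra).
  assert (0 <= cL C * (Rabs om + Rabs omh) / (2 * ca C))
    by (apply Rmult_le_pos; [nra | left; apply Rinv_0_lt_compat; lra]).
  unfold inj_speed. lra.
Qed.

Lemma hit_time_speed : hit_time * inj_speed = cL C / 2 - cr C.
Proof. pose proof inj_speed_pos. unfold hit_time. field. lra. Qed.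

Lemma hit_time_pos : 0 < hit_time.
Proof.
  pose proof disk_radius_lt_half. pose proof inj_speed_pos.
  unfold hit_time. apply Rdiv_lt_0_compat; lra.
Qed.

Lemma round_trip_lt : hit_time + hit_time < delta.
Proof.
  pose proof hit_time_speed. pose proof inj_speed_pos. pose proof cell_r_pos.
  pose proof cell_a_pos. pose proof (Rabs_pos om). pose proof (Rabs_pos omh).
  assert (cL C <= delta * inj_speed).
  { unfold inj_speed.
    replace (delta * (cL C / delta + cL C * (Rabs om + Rabs omh) / (2 * ca C) + 1))
      with (cL C + delta * (cL C * (Rabs om + Rabs omh) / (2 * ca C) + 1)) by (field; lra).
    assert (0 <= cL C * (Rabs om + Rabs omh) / (2 * ca C))
      by (apply Rmult_le_pos; [pose proof cell_L_pos; nra | left; apply Rinv_0_lt_compat; lra]).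
    nra. }
  nra.
Qed.

Lemma drift_le x : x = om \/ x = omh -> cL C * Rabs x <= 2 * ca C * inj_speed.
Proof.
  intros Hx. pose proof cell_L_pos. pose proof cell_a_pos.
  pose proof (Rabs_pos om). pose proof (Rabs_pos omh).
  assert (0 < cL C / delta) by (apply Rdiv_lt_0_compat; lra).
  unfold inj_speed.
  replace (2 * ca C * (cL C / delta + cL C * (Rabs om + Rabs omh) / (2 * ca C) + 1))
    with (2 * ca C * (cL C / delta + 1) + cL C * (Rabs om + Rabs omh)) by (field; lra).
  destruct Hx as [-> | ->]; nra.
Qed.

Lemma drift_in_opening x : x = om \/ x = omh -> Rabs (hit_time * (sgn left * x)) < ca C.
Proof.
  intros Hx. pose proof (drift_le x Hx). pose proof hit_time_speed. pose proof hit_time_pos.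
  pose proof cell_L_pos. pose proof cell_r_pos. pose proof cell_a_pos. pose proof (Rabs_pos x).
  rewrite !Rabs_mult, (Rabs_pos_eq hit_time), Rabs_sgn by lra. nra.
Qed.

Lemma flight_in_cone x d u : cL C * Rabs x <= 2 * ca C * inj_speed -> 0 < d -> 0 < u ->
  u + d * inj_speed = cL C / 2 - cr C ->
  intGamma C (opening_x C left + sgn left * u, d * (sgn left * x)).
Proof.
  intros Hx Hd Hu Hud. pose proof inj_speed_pos.
  pose proof cell_L_pos. pose proof cell_r_pos. pose proof cell_a_pos. pose proof (Rabs_pos x).
  apply opening_cone_intGamma; [nra|].
  rewrite !Rabs_mult, (Rabs_pos_eq d), Rabs_sgn by lra. nra.
Qed.

Lemma inbound_flight : free_flight C 0 entry_point v_in hit_time.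
Proof.
  intros s Hs. pose proof hit_time_speed. pose proof inj_speed_pos.
  replace (padd entry_point (pscal (s - 0) v_in))
    with (opening_x C left + sgn left * (s * inj_speed), (hit_time - s) * (sgn left * - om))
    by (unfold entry_point, v_in, padd, pscal; simpl; f_equal; ring).
  apply flight_in_cone; [| lra | nra | nra].
  rewrite Rabs_Ropp. apply drift_le. left; reflexivity.
Qed.

Lemma outbound_flight : free_flight C hit_time hit_point v_out (hit_time + hit_time).
Proof.
  intros s Hs. pose proof hit_time_speed. pose proof inj_speed_pos.
  replace (padd hit_point (pscal (s - hit_time) v_out))
    with (opening_x C left + sgn left * ((hit_time + hit_time - s) * inj_speed),
          (s - hit_time) * (sgn left * omh))
    by (unfold hit_point, v_out, opening_x, padd, pscal; simpl; f_equal; nra).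
  apply flight_in_cone; [apply drift_le; right; reflexivity | lra | nra | nra].
Qed.

Lemma hit_point_reached : hit_point = padd entry_point (pscal (hit_time - 0) v_in).
Proof.
  pose proof hit_time_speed.
  unfold hit_point, entry_point, v_in, opening_x, padd, pscal; simpl. f_equal; nra.
Qed.

Lemma exit_point_reached :
  exit_point = padd hit_point (pscal (hit_time + hit_time - hit_time) v_out).
Proof.
  pose proof hit_time_speed.
  unfold exit_point, hit_point, v_out, opening_x, padd, pscal; simpl. f_equal; nra.
Qed.

Lemma hit_point_on_disk : onDisk C hit_point.
Proof.
  pose proof cell_r_pos. unfold onDisk. apply dist_eq_sq; [lra|].
  unfold hit_point, dcenter; simpl. pose proof (sgn_sq left). nra.
Qed.

Lemma hit_point_not_boundary : ~ boundary (Gbox C) hit_point.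
Proof. apply disk_not_boundary, hit_point_on_disk. Qed.

Lemma diskN_hit_point : diskN C hit_point = (sgn left, 0).
Proof.
  pose proof cell_r_pos. unfold diskN, hit_point, dcenter, pscal, psub; simpl.
  f_equal; field; lra.
Qed.

(* At the hit point the disk normal is [(sgn, 0)] and the tangent [(0, sgn)]: the
   particle's tangential velocity [om] and the disk's [omh] are exchanged. *)
Lemma hit_event_ok : event_ok C disk_rotation hit_event.
Proof.
  pose proof hit_point_not_boundary as Hnb.
  unfold event_ok, hit_event; simpl.
  split; [right; exact hit_point_on_disk|].
  split; [intro Hc; apply Hnb, corner_boundary, Hc|].
  split; [intros Hx; exfalso; apply Hnb, boundary_Gbox; tauto|].
  split; [intros k Hk Ha; exfalso; apply Hnb, boundary_Gbox; right; right; eauto|].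
  intros _. rewrite diskN_hit_point. unfold v_in, v_out, dot, tang; simpl.
  split; [ring|]. exists hit_time. split; [exact hit_time_pos|].
  intros s Hs. unfold disk_rotation. destruct (Rlt_dec s hit_time); [|lra].
  destruct (sgn_cases left) as [-> | ->]; ring.
Qed.

Lemma exit_point_interior_opening : - ca C < snd exit_point < ca C.
Proof.
  destruct (Rabs_def2 _ _ (drift_in_opening omh (or_intror eq_refl))). simpl. lra.
Qed.

Lemma exit_point_boundary : boundary (Gbox C) exit_point.
Proof. pose proof exit_point_interior_opening. apply opening_boundary. simpl in *. lra. Qed.

Lemma exit_event_ok : event_ok C disk_rotation exit_event.
Proof.
  pose proof exit_point_interior_opening as Hy. pose proof exit_point_boundary as Hb.
  unfold event_ok, exit_event; simpl.
  split; [left; exact Hb|].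
  split; [apply opening_not_corner; exact Hy|].
  split; [reflexivity|].
  split; [intros k Hk Ha; exfalso; exact (opening_not_on_arc k _ Hk Hy Ha)|].
  intros Hd. exfalso. exact (disk_not_boundary _ Hd Hb).
Qed.

Lemma exit_point_opening : opening C left exit_point.
Proof.
  pose proof exit_point_interior_opening.
  apply opening_iff. split; [reflexivity | lra].
Qed.

Lemma exit_event_is_exit : is_exit C exit_event.
Proof.
  pose proof exit_point_opening as Hop.
  unfold is_exit, opening in *; simpl. destruct left; auto.
Qed.

Lemma injected_path :
  path_from C disk_rotation delta 0 entry_point v_in [hit_event; exit_event].
Proof.
  pose proof hit_time_pos. pose proof round_trip_lt.
  split; [simpl; lra|].
  split; [exact hit_point_reached|].
  split; [reflexivity|].
  split; [exact inbound_flight|].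
  split; [exact hit_event_ok|].
  split.
  { intros Hx. exfalso. apply hit_point_not_boundary, boundary_Gbox.
    unfold is_exit in Hx. simpl in Hx. tauto. }
  intros _. split; [simpl; lra|].
  split; [exact exit_point_reached|].
  split; [reflexivity|].
  split; [exact outbound_flight|].
  split; [exact exit_event_ok|].
  split; [intros _; reflexivity|].
  intros Hn. exfalso. exact (Hn exit_event_is_exit).
Qed.

Lemma entry_point_opening : opening C left entry_point.
Proof.
  destruct (Rabs_def2 _ _ (drift_in_opening om (or_introl eq_refl))).
  apply opening_iff. simpl. split; [reflexivity | lra].
Qed.

Lemma v_in_inward : inward left v_in.
Proof.
  apply inward_iff. simpl. pose proof inj_speed_pos. pose proof (sgn_sq left). nra.
Qed.

Lemma disk_rotation_at_delta : disk_rotation delta = om.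
Proof.
  pose proof round_trip_lt. pose proof hit_time_pos.
  unfold disk_rotation. destruct (Rlt_dec delta hit_time); [lra | reflexivity].
Qed.

Lemma injection_sys_ok (P : list (pt * pt)) (Es : list (list event)) :
  Forall2 (fun p E => path_from C disk_rotation delta 0 (fst p) (snd p) E) P Es ->
  (forall E e, In E Es -> In e E -> ~ is_disk_ev C e) ->
  sys_ok C omh delta ((entry_point, v_in) :: P) disk_rotation
    ([hit_event; exit_event] :: Es).
Proof.
  intros HF HEs. pose proof hit_time_pos.
  assert (Hexit : ~ is_disk_ev C exit_event)
    by (intros Hd; exact (disk_not_boundary _ Hd exit_point_boundary)).
  split; [unfold disk_rotation; destruct (Rlt_dec 0 hit_time); [reflexivity | lra]|].
  split; [constructor; [exact injected_path | exact HF]|].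
  split.
  { intros s t Hs Hst Ht Hnone. unfold disk_rotation.
    destruct (Rlt_dec s hit_time), (Rlt_dec t hit_time); auto; try lra.
    exfalso. apply (Hnone [hit_event; exit_event] hit_event); simpl; auto.
    - exact hit_point_on_disk.
    - lra. }
  split.
  { intros E e [<- | HE] He Hd; [|exfalso; exact (HEs E e HE He Hd)].
    destruct He as [<- | [<- | []]]; [|contradiction].
    simpl. rewrite diskN_hit_point. unfold disk_rotation.
    destruct (Rlt_dec hit_time hit_time); [lra|].
    unfold v_in, dot, tang; simpl. destruct (sgn_cases left) as [-> | ->]; ring. }
  intros [|i] [|j] E1 E2 e1 e2 Hij H1 H2 He1 He2 Hd1 Hd2; try contradiction;
    simpl in H1, H2.
  - apply nth_error_In in H2. exfalso. exact (HEs E2 e2 H2 He2 Hd2).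
  - apply nth_error_In in H1. exfalso. exact (HEs E1 e1 H1 He1 Hd1).
  - apply nth_error_In in H1. exfalso. exact (HEs E1 e1 H1 He1 Hd1).
Qed.

End Injection.

End Cell.

Theorem lemma1 (C : cell) (HC : cell_ok C) (omh tau : R) (P : list (pt * pt)) :
  0 < tau ->
  (forall p, In p P -> inGamma C (fst p)) ->
  (forall p, In p P -> exists w E, path_from C w tau 0 (fst p) (snd p) E /\
     forall e, In e E -> is_disk_ev C e -> tau <= etime e) ->
  forall (om delta : R), 0 < delta < tau ->
  forall left : bool,
  exists (y v : pt) (w : R -> R) (E : list event) (Es : list (list event)),
    opening C left y /\ inward left v /\
    sys_ok C omh delta ((y, v) :: P) w (E :: Es) /\
    w delta = om /\
    exists E0 e, E = E0 ++ [e] /\ opening C left (epos e).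
Proof.
  (* Only the disk-free paths of the resident particles matter, not their positions. *)
  intros _ _ HP om delta [Hdelta Hdelta_tau] left.
  destruct (paths_truncate C (disk_rotation C om omh delta) tau delta P ltac:(lra) HP)
    as (Es & HF & HEs).
  exists (entry_point C left om omh delta), (v_in C left om omh delta),
    (disk_rotation C om omh delta),
    [hit_event C left om omh delta; exit_event C left om omh delta], Es.
  split; [apply entry_point_opening; assumption|].
  split; [apply v_in_inward; assumption|].
  split; [apply injection_sys_ok; assumption|].
  split; [apply disk_rotation_at_delta; assumption|].
  exists [hit_event C left om omh delta], (exit_event C left om omh delta).
  split; [reflexivity | apply exit_point_opening; assumption].
Qed.
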